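(* Let $r\ge 2$, let $H$ be a digraph (possibly with loops) and let $D$ be an $H$-colored $r$-partite tournament. If $k \geq 5$, then $D$ has a $(k,H)$-kernel.
   Context: All digraphs are finite. An $r$-partite tournament is a digraph whose vertex set is partitioned into $r$ disjoint independent sets such that every two vertices in different classes are joined by exactly one arc (an asymmetric arc). $D$ has no loops and comes with a map $\rho: A(D)\to V(H)$. For a walk $W=(x_0,\ldots,x_n)$ in $D$, there is an obstruction on $x_i$ if $(\rho(x_{i-1},x_i),\rho(x_i,x_{i+1})) \notin A(H)$; for an open walk this is considered at internal vertices $x_i$, $1\le i\le n-1$, for a closed walk at all $i\in\{0,\ldots,n-1\}$ with indices modulo $n$. $O_H(W)$ is the set of indices with an obstruction; the $H$-length is $l_H(W)=|O_H(W)|+1$ for open $W$ and $|O_H(W)|$ for closed $W$. A $(k,H)$-kernel ($k\ge2$) is a set $S\subseteq V(D)$ such that for every two distinct $u,v\in S$ every directed $uv$-path in $D$ has $H$-length at least $k$, and for every $x\in V(D)\setminus S$ there is a directed path from $x$ to a vertex of $S$ of $H$-length at most $k-1$. *)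

From mathcomp Require Import all_boot.
Set Implicit Arguments. Unset Strict Implicit. Unset Printing Implicit Defensive.

(* The H-colouring rho : A(D) -> V(H) is given as a function V -> V -> W,
   only its values on arcs (x,y) with A x y are relevant. *)

Fixpoint nobs (V W : Type) (HA : rel W) (rho : V -> V -> W) (s : seq V) : nat :=
  match s with
  | x :: ((y :: z :: _) as t) => (~~ HA (rho x y) (rho y z)) + nobs HA rho t
  | _ => 0
  end.

Definition Hlength (V W : Type) (HA : rel W) (rho : V -> V -> W) (s : seq V) : nat :=
  (nobs HA rho s).+1.

Definition dpath (V : finType) (A : rel V) (u v : V) (p : seq V) : Prop :=
  path A u p /\ uniq (u :: p) /\ last u p = v.

Definition r_partite_tournament (V : finType) (A : rel V) (r : nat) : Prop :=
  exists part : V -> 'I_r,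
    (forall i : 'I_r, exists x, part x = i) /\
    (forall x y, part x = part y -> ~~ A x y) /\
    (forall x y, part x <> part y -> A x y (+) A y x).

Definition kH_kernel (V W : finType) (A : rel V) (HA : rel W) (rho : V -> V -> W)
    (k : nat) (S : {set V}) : Prop :=
  (forall u v, u \in S -> v \in S -> u <> v ->
     forall p, dpath A u v p -> k <= Hlength HA rho (u :: p)) /\
  (forall x, x \notin S ->
     exists v p, v \in S /\ dpath A x v p /\ Hlength HA rho (x :: p) <= k.-1).

(* If D has vertices without out-arcs, the set of these sinks is a
   (k,H)-kernel: no path leaves a sink, and every other vertex reaches a sink
   in at most two arcs, through an out-neighbour in another class if needed.
   Otherwise pick v maximising the number of vertices that reach v within two
   arcs.  If a vertex x outside the class of v did not reach v within three
   arcs, every vertex reaching v within two arcs would also reach x within two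
   arcs, and x itself would be a further one, contradicting the choice of v.
   So every vertex reaches v within four arcs, and {v} is a (k,H)-kernel
   because a path with m >= 1 arcs has H-length at most m. *)

From mathcomp Require Import all_boot.

Set Implicit Arguments. Unset Strict Implicit. Unset Printing Implicit Defensive.

Section HLength.

Variables (V W : Type) (HA : rel W) (rho : V -> V -> W).

Lemma nobs_le_size (s : seq V) : nobs HA rho s <= (size s).-2.
Proof.
elim: s => [|x [|y [|z t]] IHs] //=.
by rewrite -add1n leq_add ?leq_b1.
Qed.

Lemma Hlength_le_size (x : V) p :
  0 < size p -> Hlength HA rho (x :: p) <= size p.
Proof. by case: p => [|y p] // _; apply: (nobs_le_size [:: x, y & p]). Qed.

End HLength.

Section BoundedReachability.

Variables (V : finType) (A : rel V).

Fixpoint within (n : nat) (x v : V) : bool :=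
  if n is n'.+1 then (x == v) || [exists y, A x y && within n' y v] else x == v.

Definition in_ball n v := [set x | within n x v].

Definition sink x := [forall y, ~~ A x y].

Lemma within_refl n v : within n v v.
Proof. by case: n => /= [|n]; rewrite eqxx. Qed.

Lemma within_arc n x y v : A x y -> within n y v -> within n.+1 x v.
Proof.
by move=> Axy yv; apply/orP; right; apply/existsP; exists y; apply/andP.
Qed.

Lemma within_first_arc n x v :
  within n.+1 x v -> x != v -> exists2 y, A x y & within n y v.
Proof. by case/orP=> [-> //|/existsP[y /andP[]]]; exists y. Qed.

Lemma within_mono m n x v : m <= n -> within m x v -> within n x v.
Proof.
elim: n m x => [|n IHn] [|m] x //= lemn; first by move=> ->.
case/orP=> [-> //|/existsP[y /andP[Axy yv]]].
by apply: within_arc Axy _; apply: IHn yv.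
Qed.

Lemma within_walk n x v :
  within n x v -> exists p, [/\ path A x p, last x p = v & size p <= n].
Proof.
elim: n x => [|n IHn] x /=; first by move/eqP->; exists [::].
case/orP=> [/eqP->|/existsP[y /andP[Axy /IHn[p [yp yv sz_p]]]]].
  by exists [::].
by exists (y :: p); rewrite /= Axy.
Qed.

Lemma within_dpath (W : finType) (HA : rel W) (rho : V -> V -> W) n x v :
  x != v -> within n x v ->
  exists p, dpath A x v p /\ Hlength HA rho (x :: p) <= n.
Proof.
move=> neq_xv /within_walk[p [xp xv sz_p]]; rewrite -xv in neq_xv *.
case: (shortenP xp) neq_xv => q xq uniq_q sub_qp neq_xq.
have pos_q : 0 < size q.
  by case: q neq_xq {xq uniq_q sub_qp} => //=; rewrite eqxx.
exists q; split=> //.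
apply: leq_trans (Hlength_le_size HA rho x pos_q) _.
apply: leq_trans sz_p; apply: uniq_leq_size sub_qp.
by case/andP: uniq_q.
Qed.

Lemma sink_no_dpath u v p : sink u -> u <> v -> ~ dpath A u v p.
Proof.
move=> /forallP sink_u neq_uv [].
case: p => [_ [_ /= /neq_uv] //|y p /= /andP[Auy _] _].
by have := sink_u y; rewrite Auy.
Qed.

Lemma kH_kernel_of_absorbing (W : finType) (HA : rel W) (rho : V -> V -> W)
    n k (S : {set V}) :
  (forall u v p, u \in S -> v \in S -> u <> v -> ~ dpath A u v p) ->
  (forall x, x \notin S -> exists2 v, v \in S & within n x v) ->
  n < k -> kH_kernel A HA rho k S.
Proof.
move=> indepS absorbS ltnk; split=> [u v uS vS neq_uv p|x xNS].
  by move/(indepS u v p uS vS neq_uv).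
have [v vS xv] := absorbS x xNS.
have neq_xv : x != v by apply: contraNneq xNS => ->.
have [p [xvp Hlen_p]] := within_dpath HA rho neq_xv xv.
exists v, p; do 2!split=> //.
by rewrite -ltnS (ltn_predK ltnk) (leq_ltn_trans Hlen_p ltnk).
Qed.

Variables (I : eqType) (part : V -> I).
Hypothesis part_indep : forall x y, part x = part y -> ~~ A x y.
Hypothesis part_tour : forall x y, part x <> part y -> A x y (+) A y x.

Lemma arc_part_neq x y : A x y -> part x <> part y.
Proof. by move=> Axy /part_indep; rewrite Axy. Qed.

Lemma tournament_arc x y : part x <> part y -> ~~ A x y -> A y x.
Proof. by move/part_tour; case: (A x y). Qed.

Lemma sink_within1 s x : sink s -> part x <> part s -> within 1 x s.
Proof.
move=> /forallP sink_s neq_xs.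
apply: within_arc (within_refl 0 s).
by apply: tournament_arc (sink_s x); apply: nesym.
Qed.

Lemma within_via_out_arc n v x y :
  (forall u, part u <> part v -> within n u v) -> A x y -> within n.+1 x v.
Proof.
move=> reach_v Axy; have [eq_xv|neq_xv] := eqVneq (part x) (part v).
  apply: (within_arc Axy (reach_v y _)).
  by rewrite -eq_xv; apply: nesym; apply: arc_part_neq Axy.
apply: within_mono (leqnSn n) _.
by apply: reach_v; apply/eqP.
Qed.

(* An arc x -> y would give x a walk to v one arc longer than y's. *)
Lemma within_tournament_arc n x y v :
  ~~ within n.+1 x v -> within n y v -> part y <> part x -> A y x.
Proof.
move=> xNv yv neq_yx; apply: (tournament_arc (nesym neq_yx)).
by apply: contra xNv => Axy; apply: within_arc Axy yv.
Qed.

Lemma in_ball2_proper x v :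
  part x <> part v -> ~~ within 3 x v -> in_ball 2 v \proper in_ball 2 x.
Proof.
move=> neq_xv xNv; apply/properP; split; last first.
  exists x; rewrite !inE ?within_refl //.
  by apply: contra xNv; apply: within_mono.
apply/subsetP=> y; rewrite !inE => yv.
have [eq_yx|neq_yx] := eqVneq (part y) (part x); last first.
  apply: within_mono (_ : 1 <= 2) _ => //.
  apply: within_arc (within_refl 0 x).
  by apply: within_tournament_arc xNv yv _; apply/eqP.
have [->|neq_y_x] := eqVneq y x; first exact: within_refl.
have neq_y_v : y != v by apply/eqP=> eq_yv; apply: neq_xv; rewrite -eq_yx eq_yv.
have [w Ayw wv] := within_first_arc yv neq_y_v.
apply: (within_arc Ayw (within_arc _ (within_refl 0 x))).
have xNv2 : ~~ within 2 x v by apply: contra xNv; apply: within_mono.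
apply: within_tournament_arc xNv2 wv _.
by rewrite -eq_yx; apply: nesym; apply: arc_part_neq Ayw.
Qed.

Lemma within3_of_max_in_ball2 v :
  (forall u, #|in_ball 2 u| <= #|in_ball 2 v|) ->
  forall x, part x <> part v -> within 3 x v.
Proof.
move=> max_v x neq_xv; apply: contraT => xNv.
by have := proper_card (in_ball2_proper neq_xv xNv); rewrite ltnNge max_v.
Qed.

End BoundedReachability.

Theorem theorem25 (V W : finType) (A : rel V) (HA : rel W) (rho : V -> V -> W)
    (r k : nat) :
  2 <= r ->
  (forall x, ~~ A x x) ->
  r_partite_tournament A r ->
  5 <= k ->
  exists S : {set V}, kH_kernel A HA rho k S.
Proof.
(* Looplessness already follows from the independence of the classes. *)
move=> le2r _ [part [part_onto [part_indep part_tour]]] le5k.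
case: (pickP (sink A)) => [s0 sink_s0|no_sink].
  exists [set s | sink A s]; apply: (kH_kernel_of_absorbing HA rho (n := 2)).
  - by move=> u v p; rewrite inE => sink_u _; apply: sink_no_dpath.
  - move=> x; rewrite inE => /forallPn[y]; rewrite negbK => Axy.
    exists s0; first by rewrite inE.
    apply: (within_via_out_arc part_indep) Axy.
    by move=> u /(sink_within1 part_tour sink_s0).
  - exact: leq_trans _ le5k.
have [v0 _] := part_onto (Ordinal (ltnW le2r)).
have [v _ max_v] := arg_maxnP (fun v => #|in_ball A 2 v|) (isT : xpredT v0).
exists [set v]; apply: (kH_kernel_of_absorbing HA rho (n := 4)) => //.
  by move=> u v' p; rewrite !inE => /eqP-> /eqP->.
move=> x _; exists v; rewrite ?inE //.
have /forallPn[y] := negbT (no_sink x); rewrite negbK => Axy.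
apply: (within_via_out_arc part_indep) Axy.
exact: within3_of_max_in_ball2 part_indep part_tour _ (fun u => max_v u isT).
Qed.
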